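(* Let $T$ be a monoid, $Y$ a semilattice and $\cdot$ a left partially defined action of $T$ on $Y$ satisfying axioms (A), (B), (C), such that $M(T,Y)$ is an ultra $F$-restriction monoid. Let $\circ$ be the reverse right partial action, and for $t\in T$ let $d_t$ and $r_t$ be the greatest elements of $\mathrm{dom}(\varphi_t)$ and $\mathrm{ran}(\varphi_t)$, respectively. For $t\in T$, $y\in Y$ put $t*y=t\cdot(y\wedge d_t)$ and $y\bullet t=(y\wedge r_t)\circ t$. Then: (1) $*$ and $\bullet$ form a double action of $T$ on $Y$ (so $Y*_mT$ can be formed); (2) $Y*_mT$ and $M(T,Y)$ are equal as $(2,1,1,0)$-algebras.
   Context: A left partial action of $T$ on $Y$: partial map $(t,y)\mapsto t\cdot y$, $1\cdot y=y$ always defined, and if $t\cdot y$, $s\cdot(t\cdot y)$ are defined then $(st)\cdot y$ is defined and equals it. With $\varphi_t\colon y\mapsto t\cdot y$: (A) $\mathrm{dom}\varphi_t$, $\mathrm{ran}\varphi_t$ are order ideals of $Y$; (B) $\varphi_t$ is an order-isomorphism $\mathrm{dom}\varphi_t\to\mathrm{ran}\varphi_t$; (C) $\mathrm{dom}\varphi_t\ne\varnothing$. Partially defined action: $(st)\cdot x$ defined iff $t\cdot x$ and $s\cdot(t\cdot x)$ defined. Reverse right partial action: $y\circ t$ defined iff $y\in\mathrm{ran}\varphi_t$, with $y\circ t=\varphi_t^{-1}(y)$. $M(T,Y)=\{(y,t)\colon y\circ t\text{ defined}\}$ with $(x,s)(y,t)=(s\cdot((x\circ s)\wedge y),st)$,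 $(y,t)^*=(y\circ t,1)$, $(y,t)^+=(y,1)$. Restriction semigroups: algebras $(S,\cdot,{}^*,{}^+)$ with $(S,\cdot)$ a semigroup satisfying $xx^*=x$, $x^*y^*=y^*x^*$, $(xy^* )^*=x^*y^*$, $x^*y=y(xy)^*$, $x^+x=x$, $x^+y^+=y^+x^+$, $(x^+y)^+=x^+y^+$, $xy^+=(xy)^+x$, $(x^+)^*=x^+$, $(x^* )^+=x^*$. $P(S)=\{x^*\}$; $\sigma$ the least congruence identifying projections; proper: ($a^*=b^*$, $a\sigma b$) or ($a^+=b^+$, $a\sigma b$) imply $a=b$; $F$-restriction: every $\sigma$-class has a maximum for the order $a\le b\iff a=eb$, $e\in P(S)$. Underlying left partial action of proper $S$: of $S/\sigma$ on $P(S)$, $t\cdot e$ defined iff some $a\in t$ has $a^*\ge e$, value $(ae)^+$. Ultra $F$-restriction monoid: proper $F$-restriction monoid whose underlying left partial action is a partially defined action. Double action of $T$ on a semilattice $Y$ with identity $\epsilon$: a left action $*$ and right action $\bullet$ with $t*(x\wedge y)=t*x\wedge t*y$, $(x\wedge y)\bullet t=x\bullet t\wedge y\bullet t$, $(t*x)\bullet t=\epsilon\bullet t\wedge x$, $t*(x\bullet t)=x\wedge t*\epsilon$. Then $Y*_mT=\{(y,t)\colon y\le t*\epsilon\}$ with $(x,s)(y,t)=(x\wedge s*y,st)$, $(y,t)^*=(y\bullet t,1)$, $(y,t)^+=(y,1)$, identity $(\epsilon,1)$. *)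

From HB Require Import structures.
From mathcomp Require Import all_boot all_order.
From Stdlib Require Import ClassicalEpsilon.

Set Implicit Arguments.
Unset Strict Implicit.
Unset Printing Implicit Defensive.

Import Order.TTheory.
Local Open Scope order_scope.

(* Abstract restriction monoids, carried by a subset P of an ambient type A  *)
Section Restriction.
Variables (A : Type) (P : A -> Prop) (mul : A -> A -> A) (star plus : A -> A)
          (one : A).

Definition restriction_monoid_on : Prop :=
  P one /\
  (forall x y, P x -> P y -> P (mul x y)) /\
  (forall x, P x -> P (star x) /\ P (plus x)) /\
  (forall x y z, P x -> P y -> P z -> mul (mul x y) z = mul x (mul y z)) /\
  (forall x, P x -> mul one x = x /\ mul x one = x) /\
  (forall x y, P x -> P y ->
     mul x (star x) = x /\
     mul (star x) (star y) = mul (star y) (star x) /\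
     star (mul x (star y)) = mul (star x) (star y) /\
     mul (star x) y = mul y (star (mul x y)) /\
     mul (plus x) x = x /\
     mul (plus x) (plus y) = mul (plus y) (plus x) /\
     plus (mul (plus x) y) = mul (plus x) (plus y) /\
     mul x (plus y) = mul (plus (mul x y)) x /\
     star (plus x) = plus x /\
     plus (star x) = star x).

Definition is_proj (e : A) : Prop := exists a, P a /\ e = star a.

Definition congruence_on (R : A -> A -> Prop) : Prop :=
  [/\ (forall a, P a -> R a a),
      (forall a b, R a b -> R b a),
      (forall a b c, R a b -> R b c -> R a c),
      (forall a b c d, P a -> P b -> P c -> P d -> R a b -> R c d ->
          R (mul a c) (mul b d)) &
      (forall a b, P a -> P b -> R a b -> R (star a) (star b) /\ R (plus a) (plus b))].

Definition sigma (a b : A) : Prop :=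
  P a /\ P b /\
  forall R, congruence_on R -> (forall e f, is_proj e -> is_proj f -> R e f) -> R a b.

Definition nat_le (a b : A) : Prop := exists e, is_proj e /\ a = mul e b.

Definition proper : Prop :=
  forall a b, P a -> P b -> sigma a b ->
    (star a = star b -> a = b) /\ (plus a = plus b -> a = b).

Definition F_restriction : Prop :=
  forall a, P a -> exists m, sigma a m /\ forall b, sigma a b -> nat_le b m.

(* Underlying left partial action of S/sigma on P(S): for the class [a] and a
   projection e, [a].e is defined iff some a' in [a] has a'^* >= e, and then
   [a].e = (a' e)^+ .  Classes are represented by elements of P. *)
Definition upa_defined (a e : A) : Prop :=
  exists a', sigma a a' /\ nat_le e (star a').
Definition upa_graph (a e f : A) : Prop :=
  exists a', sigma a a' /\ nat_le e (star a') /\ f = plus (mul a' e).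

Definition upa_partially_defined : Prop :=
  forall a b e, P a -> P b -> is_proj e ->
    (upa_defined (mul a b) e <->
       exists f, upa_graph b e f /\ upa_defined a f).

Definition ultra_F_restriction_monoid_on : Prop :=
  [/\ restriction_monoid_on, proper, F_restriction & upa_partially_defined].

End Restriction.

Section PartialAction.
Variables (T : monoidType) (d : Order.disp_t) (Y : tMeetSemilatticeType d).
Variable act : T -> Y -> option Y.

Definition pdom (t : T) (y : Y) : Prop := exists z, act t y = Some z.
Definition pran (t : T) (z : Y) : Prop := exists y, act t y = Some z.

Definition left_partial_action : Prop :=
  (forall y, act one y = Some y) /\
  (forall s t y z w, act t y = Some z -> act s z = Some w -> act (mul s t) y = Some w).

Definition axiomA : Prop := forall t,
  (forall x y, pdom t y -> x <= y -> pdom t x) /\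
  (forall x y, pran t y -> x <= y -> pran t x).

(* phi_t : dom -> ran is an order isomorphism (it is onto ran by definition) *)
Definition axiomB : Prop := forall t x y x' y',
  act t x = Some x' -> act t y = Some y' -> (x' <= y' <-> x <= y).

Definition axiomC : Prop := forall t, exists y, pdom t y.

Definition partially_defined_action : Prop := forall s t x,
  pdom (mul s t) x <-> exists z, act t x = Some z /\ pdom s z.

(* total value of t.y (meaningful only when defined) *)
Definition actv (t : T) (y : Y) : Y := odflt y (act t y).

(* reverse right partial action: y o t = phi_t^{-1}(y) (meaningful when
   y \in ran phi_t) *)
Definition rev (t : T) (y : Y) : Y :=
  epsilon (inhabits y) (fun x => act t x = Some y).

Definition inM (p : Y * T) : Prop := pran p.2 p.1.
Definition mulM (p q : Y * T) : Y * T :=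
  (actv p.2 (rev p.2 p.1 `&` q.1), mul p.2 q.2).
Definition starM (p : Y * T) : Y * T := (rev p.2 p.1, one).
Definition plusM (p : Y * T) : Y * T := (p.1, one).
Definition oneM : Y * T := (\top, one).

Definition greatest_of (S : Y -> Prop) (m : Y) : Prop :=
  S m /\ forall y, S y -> y <= m.
Definition dmax (t : T) : Y := epsilon (inhabits \top) (greatest_of (pdom t)).
Definition rmax (t : T) : Y := epsilon (inhabits \top) (greatest_of (pran t)).

Definition lstar (t : T) (y : Y) : Y := actv t (y `&` dmax t).
Definition rbullet (y : Y) (t : T) : Y := rev t (y `&` rmax t).

End PartialAction.

Section DoubleAction.
Variables (T : monoidType) (d : Order.disp_t) (Y : meetSemilatticeType d).
Variable eps : Y.
Variables (la : T -> Y -> Y) (ra : Y -> T -> Y).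

Definition double_action : Prop :=
  ((forall y, la one y = y) /\ (forall s t y, la (mul s t) y = la s (la t y))) /\
  ((forall y, ra y one = y) /\ (forall s t y, ra y (mul s t) = ra (ra y s) t)) /\
  (forall t x y, la t (x `&` y) = la t x `&` la t y) /\
  (forall t x y, ra (x `&` y) t = ra x t `&` ra y t) /\
  (forall t x, ra (la t x) t = ra eps t `&` x) /\
  (forall t x, la t (ra x t) = x `&` la t eps).

Definition inYmT (p : Y * T) : Prop := p.1 <= la p.2 eps.
Definition mulYmT (p q : Y * T) : Y * T := (p.1 `&` la p.2 q.1, mul p.2 q.2).
Definition starYmT (p : Y * T) : Y * T := (ra p.1 p.2, one).
Definition plusYmT (p : Y * T) : Y * T := (p.1, one).
Definition oneYmT : Y * T := (eps, one).

End DoubleAction.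

From Pilot Require Import Defs.
From mathcomp Require Import all_boot all_order.
From Stdlib Require Import ClassicalEpsilon.
Set Implicit Arguments.
Unset Strict Implicit.
Unset Printing Implicit Defensive.
Import Order.TTheory.
Local Open Scope order_scope.

(* In M(T,Y) every (z, t) with z in ran(phi_t) is sigma-related to (y, t),
   since multiplying on the left by the projections (z, 1) and (y, 1) makes
   both equal to (y /\ z, t).  So the maximum of that sigma-class, which the
   F-restriction property provides, is (r_t, t) with r_t the greatest element
   of ran(phi_t); then d_t = r_t o t.  As phi_t is an order isomorphism between
   order ideals it preserves meets, which gives the meet laws of the double
   action, and the partially-defined-action axiom describes dom(phi_st) as
   phi_t^-1 (ran(phi_t) /\ dom(phi_s)), which gives the two action laws. *)

Section OrderIsomorphism.
Variables (T : monoidType) (d : Order.disp_t) (Y : tMeetSemilatticeType d).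
Variable act : T -> Y -> option Y.
Hypothesis hB : axiomB act.

Lemma act_inj t x y z : act t x = Some z -> act t y = Some z -> x = y.
Proof.
by move=> hx hy; apply/le_anti/andP; split; [apply/(hB hx hy) | apply/(hB hy hx)].
Qed.

Lemma act_mono t x y x' y' :
  act t x = Some x' -> act t y = Some y' -> x <= y -> x' <= y'.
Proof. by move=> hx hy /(hB hx hy). Qed.

Lemma act_rev t z : pran act t z -> act t (Defs.rev act t z) = Some z.
Proof. exact: epsilon_spec. Qed.

Lemma rev_act t x z : act t x = Some z -> Defs.rev act t z = x.
Proof. by move=> h; apply: act_inj (act_rev (ex_intro _ x h)) h. Qed.

Lemma actv_act t x z : act t x = Some z -> actv act t x = z.
Proof. by rewrite /actv => ->. Qed.

Lemma act_actv t x : pdom act t x -> act t x = Some (actv act t x).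
Proof. by case=> z h; rewrite (actv_act h). Qed.

Hypothesis hA : axiomA act.

Lemma act_meet t a b a' b' : act t a = Some a' -> act t b = Some b' ->
  act t (a `&` b) = Some (a' `&` b').
Proof.
move=> ha hb.
have hc : act t (a `&` b) = Some (actv act t (a `&` b)).
  by apply: act_actv; apply: (hA t).1 (leIl a b); exists a'.
have he : act t (Defs.rev act t (a' `&` b')) = Some (a' `&` b').
  by apply: act_rev; apply: (hA t).2 (leIl a' b'); exists a.
rewrite hc; congr Some; apply/le_anti/andP; split.
  by rewrite lexI (act_mono hc ha (leIl _ _)) (act_mono hc hb (leIr _ _)).
apply/(hB he hc); rewrite lexI.
by apply/andP; split; [apply/(hB he ha) | apply/(hB he hb)]; rewrite ?leIl ?leIr.
Qed.

Lemma greatest_dom_rev t r :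
  greatest_of (pran act t) r -> greatest_of (pdom act t) (Defs.rev act t r).
Proof.
move=> [hr r_ge]; have he := act_rev hr.
split; first by exists r.
by move=> x [x' hx]; apply/(hB hx he)/r_ge; exists x.
Qed.

End OrderIsomorphism.

Section ProjectionsOfM.
Variables (T : monoidType) (d : Order.disp_t) (Y : tMeetSemilatticeType d).
Variable act : T -> Y -> option Y.
Hypotheses (hL : left_partial_action act) (hB : axiomB act).

Lemma actv_one y : actv act one y = y.
Proof. exact: actv_act (hL.1 y). Qed.

Lemma rev_one y : Defs.rev act one y = y.
Proof. exact: (rev_act hB (hL.1 y)). Qed.

Lemma inM_proj y : inM act (y, one).
Proof. by exists y; exact: hL.1. Qed.

Lemma is_proj_M y : is_proj (inM act) (starM act) (y, one).
Proof. by exists (y, one); rewrite /starM /= rev_one; split=> //; apply: inM_proj. Qed.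

Lemma mulM_proj y p : mulM act (y, one) p = (y `&` p.1, p.2).
Proof. by rewrite /mulM /= rev_one actv_one mul1g. Qed.

Lemma sigmaM_same_label t y z : pran act t y -> pran act t z ->
  sigma (inM act) (mulM act) (starM act) (@plusM T d Y) (y, t) (z, t).
Proof.
move=> hy hz; do 2!split=> //; move=> R [Rrefl Rsym Rtrans Rmul _] Rproj.
have Rmeet u v : pran act t v -> R (u `&` v, t) (v, t).
  move=> hv; have Pv : inM act (v, t) := hv.
  have := Rmul _ _ _ _ (inM_proj u) (inM_proj v) Pv Pv
    (Rproj _ _ (is_proj_M u) (is_proj_M v)) (Rrefl _ Pv).
  by rewrite !mulM_proj /= meetxx.
by apply: Rtrans (Rmeet y z hz); apply: Rsym; rewrite meetC; apply: Rmeet.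
Qed.

Lemma nat_leM_label w t m : nat_le (inM act) (mulM act) (starM act) (w, t) m ->
  m.2 = t /\ w <= m.1.
Proof.
case=> e [[a [_ ->]]]; rewrite /starM mulM_proj => -[-> ->].
by split=> //; apply: leIr.
Qed.

Lemma F_restriction_greatest_ran :
  axiomC act -> F_restriction (inM act) (mulM act) (starM act) (@plusM T d Y) ->
  forall t, exists r, greatest_of (pran act t) r.
Proof.
move=> hC hF t; have [y [z hz]] := hC t.
have Pz : inM act (z, t) by exists y.
have [m [[_ [Pm _]] mmax]] := hF _ Pz.
have [mt _] := nat_leM_label (mmax _ (sigmaM_same_label Pz Pz)).
exists m.1; split; first by move: Pm; rewrite /inM mt.
by move=> w hw; exact: (nat_leM_label (mmax _ (sigmaM_same_label Pz hw))).2.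
Qed.

End ProjectionsOfM.

Section DoubleAction.
Variables (T : monoidType) (d : Order.disp_t) (Y : tMeetSemilatticeType d).
Variable act : T -> Y -> option Y.
Hypotheses (hL : left_partial_action act) (hA : axiomA act) (hB : axiomB act)
  (hP : partially_defined_action act).
Hypothesis ran_greatest : forall t, exists r, greatest_of (pran act t) r.

Lemma rmax_greatest t : greatest_of (pran act t) (rmax act t).
Proof. by have [r hr] := ran_greatest t; apply: epsilon_spec; exists r. Qed.

Lemma rmax_ge t z : pran act t z -> z <= rmax act t.
Proof. exact: (rmax_greatest t).2. Qed.

Lemma dmax_greatest t : greatest_of (pdom act t) (dmax act t).
Proof.
by apply: epsilon_spec; exists (Defs.rev act t (rmax act t));
  apply: greatest_dom_rev; [apply: hB | apply: rmax_greatest].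
Qed.

Lemma dmax_ge t x : pdom act t x -> x <= dmax act t.
Proof. exact: (dmax_greatest t).2. Qed.

Lemma act_dmax t : act t (dmax act t) = Some (rmax act t).
Proof.
have [hd le_rev] := greatest_dom_rev hB (rmax_greatest t).
suff -> : dmax act t = Defs.rev act t (rmax act t).
  by apply: act_rev; exact: (rmax_greatest t).1.
by apply/le_anti; rewrite dmax_ge // le_rev //; apply: (dmax_greatest t).1.
Qed.

Lemma act_lstar t y : act t (y `&` dmax act t) = Some (lstar act t y).
Proof. by apply: act_actv; apply: (hA t).1 (leIr _ _); apply: (dmax_greatest t).1. Qed.

Lemma act_rbullet t y : act t (rbullet act y t) = Some (y `&` rmax act t).
Proof. by apply: act_rev; apply: (hA t).2 (leIr _ _); apply: (rmax_greatest t).1. Qed.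

Lemma lstar_top t : lstar act t \top = rmax act t.
Proof. by rewrite /lstar meet1x (actv_act (act_dmax t)). Qed.

Lemma lstar_one y : lstar act one y = y.
Proof.
rewrite /lstar; have -> : dmax act one = \top.
  by apply/le_anti; rewrite lex1 dmax_ge //; exists \top; apply: hL.1.
by rewrite meetx1 (actv_one hL).
Qed.

Lemma rbullet_one y : rbullet act y one = y.
Proof.
rewrite /rbullet; have -> : rmax act one = \top.
  by apply/le_anti; rewrite lex1 rmax_ge //; exists \top; apply: hL.1.
by rewrite meetx1 (rev_one hL hB).
Qed.

Lemma act_mul_comp s t x w :
  act (mul s t) x = Some w <-> exists2 z, act t x = Some z & act s z = Some w.
Proof.
split=> [hw | [z hz hw]]; last exact: hL.2 hz hw.
have [z [hz [w' hw']]] := (hP s t x).1 (ex_intro _ _ hw).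
by exists z => //; move: (hL.2 _ _ _ _ _ hz hw'); rewrite hw => -[->].
Qed.

Lemma lstar_mul s t y : lstar act (mul s t) y = lstar act s (lstar act t y).
Proof.
have hw := act_lstar t y; set w := lstar act t y in hw *.
have [z hz hsz] := (act_mul_comp _ _ _ _).1 (act_lstar (mul s t) y).
suff ez : z = w `&` dmax act s by move: hsz; rewrite ez act_lstar => -[].
have hu : pran act t (w `&` dmax act s).
  by apply: (hA t).2 (leIl _ _); exists (y `&` dmax act t).
have hv := act_rev hu; set v := Defs.rev act t _ in hv.
have vy : v <= y `&` dmax act t by apply/(hB hv hw); apply: leIl.
have hsv := hL.2 _ _ _ _ _ hv (act_lstar s w).
apply/le_anti/andP; split.
  rewrite lexI (dmax_ge (ex_intro _ _ hsz)) andbT; apply: (act_mono hB hz hw).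
  by rewrite lexI leIl dmax_ge //; exists z.
apply: (act_mono hB hv hz); rewrite lexI (le_trans vy (leIl _ _)) dmax_ge //.
by exists (lstar act s w).
Qed.

Lemma rbullet_mul s t y :
  rbullet act y (mul s t) = rbullet act (rbullet act y s) t.
Proof.
have hb := act_rbullet s y; set b := rbullet act y s in hb *.
have hR := act_rbullet t b; set R := rbullet act b t in hR *.
have hc : act s (b `&` rmax act t) = Some (actv act s (b `&` rmax act t)).
  by apply: act_actv; apply: (hA s).1 (leIl _ _); exists (y `&` rmax act s).
set c := actv act s _ in hc.
have hL' := act_rbullet (mul s t) y.
have [z hz hsz] := (act_mul_comp _ _ _ _).1 hL'.
suff ec : y `&` rmax act (mul s t) = c.
  by rewrite ec in hL'; apply: (act_inj hB hL'); apply: hL.2 hR hc.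
apply/le_anti/andP; split.
  apply: (act_mono hB hsz hc).
  have zr : z <= rmax act t by rewrite rmax_ge //; exists (rbullet act y (mul s t)).
  rewrite lexI zr andbT.
  by apply/(hB hsz hb); rewrite lexI leIl rmax_ge //; exists z.
rewrite lexI rmax_ge ?andbT; last by exists R; apply: hL.2 hR hc.
by apply: le_trans (leIl _ (rmax act s)); apply: (act_mono hB hc hb (leIl _ _)).
Qed.

Lemma lstar_meet t x y : lstar act t (x `&` y) = lstar act t x `&` lstar act t y.
Proof.
have := act_meet hB hA (act_lstar t x) (act_lstar t y).
by rewrite meetACA meetxx act_lstar => -[].
Qed.

Lemma rbullet_meet t x y :
  rbullet act (x `&` y) t = rbullet act x t `&` rbullet act y t.
Proof.
have := act_meet hB hA (act_rbullet t x) (act_rbullet t y).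
by rewrite meetACA meetxx; apply: rev_act.
Qed.

Lemma rbullet_lstar t x : rbullet act (lstar act t x) t = rbullet act \top t `&` x.
Proof.
have hx := act_lstar t x.
rewrite /rbullet meet_l; last by rewrite rmax_ge //; exists (x `&` dmax act t).
by rewrite (rev_act hB hx) meet1x (rev_act hB (act_dmax t)) meetC.
Qed.

Lemma lstar_rbullet t x : lstar act t (rbullet act x t) = x `&` lstar act t \top.
Proof.
have hx := act_rbullet t x.
rewrite lstar_top /lstar meet_l; last by rewrite dmax_ge //; exists (x `&` rmax act t).
exact: actv_act hx.
Qed.

Lemma double_action_lstar_rbullet : double_action \top (lstar act) (rbullet act).
Proof.
split; first by split; [exact: lstar_one | exact: lstar_mul].
split; first by split; [exact: rbullet_one | exact: rbullet_mul].
split; first exact: lstar_meet.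
split; first exact: rbullet_meet.
by split; [exact: rbullet_lstar | exact: lstar_rbullet].
Qed.

Lemma inYmT_inM p : inYmT \top (lstar act) p <-> inM act p.
Proof.
case: p => y t; rewrite /inYmT /inM /= lstar_top; split; last exact: rmax_ge.
by move=> h; apply: (hA t).2 h; apply: (rmax_greatest t).1.
Qed.

Lemma mulYmT_mulM p q : inM act p -> mulYmT (lstar act) p q = mulM act p q.
Proof.
case: p q => [y s] [z t] hp; rewrite /mulYmT /mulM /=; congr pair.
have hr := act_rev hp; set x := Defs.rev act s y in hr *.
have := act_meet hB hA hr (act_lstar s z).
rewrite meetCA (meet_l (dmax_ge (ex_intro _ _ hr))) meetC.
by move/actv_act.
Qed.

Lemma starYmT_starM p : inM act p -> starYmT (rbullet act) p = starM act p.
Proof. by case: p => y t hp; rewrite /starYmT /starM /rbullet /= meet_l // rmax_ge. Qed.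

End DoubleAction.

Theorem proposition3p13 (T : monoidType) (d : Order.disp_t)
  (Y : tMeetSemilatticeType d) (act : T -> Y -> option Y) :
  left_partial_action act -> axiomA act -> axiomB act -> axiomC act ->
  partially_defined_action act ->
  ultra_F_restriction_monoid_on (@inM T d Y act) (mulM act) (starM act)
    (@plusM T d Y) (@oneM T d Y) ->
  (forall t, (exists m, greatest_of (pdom act t) m) /\
             (exists m, greatest_of (pran act t) m)) /\
  double_action \top (lstar act) (rbullet act) /\
  [/\ (forall p, inYmT \top (lstar act) p <-> inM act p),
      (forall p q, inM act p -> inM act q ->
          mulYmT (lstar act) p q = mulM act p q),
      (forall p, inM act p -> starYmT (rbullet act) p = starM act p),
      (forall p, inM act p -> @plusYmT T d Y p = @plusM T d Y p) &
      @oneYmT T d Y \top = @oneM T d Y].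
Proof.
move=> hL hA hB hC hP [_ _ hF _].
have ran_greatest := F_restriction_greatest_ran hL hB hC hF.
split.
  move=> t; split; last exact: ran_greatest.
  by exists (dmax act t); apply: dmax_greatest.
split; first exact: double_action_lstar_rbullet.
split=> //.
- exact: inYmT_inM.
- by move=> p q hp _; apply: mulYmT_mulM.
- exact: starYmT_starM.
Qed.
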